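(* Let $a_1,\dots,a_n$ be positive integers and $\mathcal{G}=\mathcal{G}[a_1,\dots,a_n]$, and let $e_d$ be the last edge of this presentation of $\mathcal{G}$. (a) The reflection of $\mathcal{G}$ in the line $y=x$ is (a translate of) $\mathcal{G}[1,a_1-1,a_2,\dots,a_n]$; in particular $\mathcal{G}[a_1,\dots,a_n]\cong\mathcal{G}[1,a_1-1,a_2,\dots,a_n]$. (b) The reflection of $\mathcal{G}$ in the line $y=-x$ is (a translate of) $\mathcal{G}[1,a_n-1,a_{n-1},\dots,a_2,a_1]$ if $e_d$ is the north edge of the last tile, and of $\mathcal{G}[a_n,\dots,a_2,a_1]$ if $e_d$ is the east edge of the last tile. (c) The rotation of $\mathcal{G}$ by $180^\circ$ is (a translate of) $\mathcal{G}[a_n,\dots,a_2,a_1]$ if $e_d$ is the north edge of the last tile, and of $\mathcal{G}[1,a_n-1,a_{n-1},\dots,a_2,a_1]$ if $e_d$ is the east edge of the last tile.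
   Context: A tile is a unit square in the plane with sides parallel to the axes, viewed as a graph with 4 vertices and 4 edges. A snake graph with $d\ge1$ tiles is a planar graph which is the union of tiles $G_1,\dots,G_d$ with each $G_{i+1}$ the translate of $G_i$ by $(0,1)$ or $(1,0)$, so that $G_i,G_{i+1}$ share exactly one edge $e_i$; snake graphs are considered up to translation. A sign function on a snake graph is a map $f$ from edges to $\{+,-\}$ such that in each tile the north and west edges have the same sign, the south and east edges have the same sign, and north and south edges have opposite signs. For positive integers $a_1,\dots,a_n$ with $d=a_1+\dots+a_n-1\ge1$, $\mathcal{G}[a_1,\dots,a_n]$ is the unique snake graph with tiles $G_1,\dots,G_d$ admitting a sign function $f$ and an edge $e_d\in\{\text{north edge of }G_d,\text{east edge of }G_d\}$ such that, with $e_0$ the south edge of $G_1$ and $e_i$ ($1\le i\le d-1$) the edge shared by $G_i,G_{i+1}$, the sequence $(f(e_0),\dots,f(e_d))$ consists of $a_1$ copies of a sign $s$, then $a_2$ copies of $-s$, then $a_3$ copies of $s$, etc.; the edge $e_d$ is then uniquely determined by the sequence $(a_1,\dots,a_n)$ and is called the last edge of this presentation. Sequences with an entry equal to $0$ are interpreted via $[\dots,a,0,b,\dots]=[\dots,a+b,\dots]$ (e.g. $\mathcal{G}[1,0,b,\dots]=\mathcal{G}[1+b,\dots]$). *)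

From Stdlib Require Import ZArith List Bool Lia.
Import ListNotations.
Open Scope Z_scope.

(* A unit edge of the integer lattice:
   H x y = segment (x,y)-(x+1,y),  V x y = segment (x,y)-(x,y+1). *)
Inductive edge : Type := H (x y : Z) | V (x y : Z).

(* Edges of the tile (unit square) with lower-left corner (x,y). *)
Definition south (p : Z * Z) : edge := H (fst p) (snd p).
Definition north (p : Z * Z) : edge := H (fst p) (snd p + 1).
Definition west  (p : Z * Z) : edge := V (fst p) (snd p).
Definition east  (p : Z * Z) : edge := V (fst p + 1) (snd p).

(* A snake graph (up to translation) is given by its list of steps:
   s has length d-1, entry true = G_{i+1} is G_i translated by (1,0) (east),
   false = translated by (0,1) (north). Tiles are indexed 0..d-1 here
   (tile i here is G_{i+1} of the paper); tile 0 has lower-left corner (0,0). *)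
Definition tpos (s : list bool) (i : nat) : Z * Z :=
  (Z.of_nat (count_occ Bool.bool_dec (firstn i s) true),
   Z.of_nat (count_occ Bool.bool_dec (firstn i s) false)).

Definition in_tile (p : Z * Z) (e : edge) : Prop :=
  e = south p \/ e = north p \/ e = west p \/ e = east p.

Definition snake_edges (s : list bool) (e : edge) : Prop :=
  exists i : nat, (i <= length s)%nat /\ in_tile (tpos s i) e.

(* Sign function (sign + = true, - = false), given as a function on all
   lattice edges; only its values on the edges of the snake matter. *)
Definition sign_fun (s : list bool) (f : edge -> bool) : Prop :=
  forall i : nat, (i <= length s)%nat ->
    f (north (tpos s i)) = f (west (tpos s i)) /\
    f (south (tpos s i)) = f (east (tpos s i)) /\
    f (north (tpos s i)) <> f (south (tpos s i)).

(* e_1, ..., e_{d-1}: edge shared by G_i and G_{i+1}. *)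
Definition interior_edges (s : list bool) : list edge :=
  map (fun i => if nth i s false then east (tpos s i) else north (tpos s i))
      (seq 0 (length s)).

Inductive last_kind : Type := LNorth | LEast.

Definition last_edge (s : list bool) (k : last_kind) : edge :=
  match k with
  | LNorth => north (tpos s (length s))
  | LEast => east (tpos s (length s))
  end.

(* a_1 copies of sg, then a_2 copies of -sg, ...  Zero entries merge the
   neighbouring blocks, which is exactly the convention [..,a,0,b,..]=[..,a+b,..]. *)
Fixpoint sign_pattern (sg : bool) (a : list nat) : list bool :=
  match a with
  | [] => []
  | k :: r => repeat sg k ++ sign_pattern (negb sg) r
  end.

(* is_G a s k : the snake graph with step list s is G[a_1,...,a_n]
   and k is (the kind of) the last edge e_d of this presentation. *)
Definition is_G (a : list nat) (s : list bool) (k : last_kind) : Prop :=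
  exists f : edge -> bool, sign_fun s f /\
  exists sg : bool,
    map f (south (tpos s 0) :: interior_edges s ++ [last_edge s k])
    = sign_pattern sg a.

(* reflection in y = x : (x,y) |-> (y,x) *)
Definition refl_diag (e : edge) : edge :=
  match e with H x y => V y x | V x y => H y x end.
(* reflection in y = -x : (x,y) |-> (-y,-x) *)
Definition refl_antidiag (e : edge) : edge :=
  match e with H x y => V (- y) (- x - 1) | V x y => H (- y - 1) (- x) end.
(* rotation by 180 degrees : (x,y) |-> (-x,-y) *)
Definition rot180 (e : edge) : edge :=
  match e with H x y => H (- x - 1) (- y) | V x y => V (- x) (- y - 1) end.
Definition shift (u v : Z) (e : edge) : edge :=
  match e with H x y => H (x + u) (y + v) | V x y => V (x + u) (y + v) end.

Definition image (g : edge -> edge) (P : edge -> Prop) (e : edge) : Prop :=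
  exists e0, P e0 /\ e = g e0.

Definition translate_of (P Q : edge -> Prop) : Prop :=
  exists u v : Z, forall e, Q e <-> P (shift u v e).

Definition mod_first (a : list nat) : list nat :=
  match a with [] => [] | x :: r => 1%nat :: (x - 1)%nat :: r end.

Definition transform_is (g : edge -> edge) (s : list bool) (b : list nat) : Prop :=
  (exists s' k', is_G b s' k') /\
  forall s' k', is_G b s' k' -> translate_of (image g (snake_edges s)) (snake_edges s').

From Pilot Require Import Defs.
From Stdlib Require Import ZArith List Bool Lia.
Import ListNotations.
Open Scope Z_scope.

(* In every tile the entering edge (south or west) and the leaving edge (north
   or east) carry opposite signs exactly when they are both horizontal or both
   vertical.  Hence the sign sequence f(e_0), ..., f(e_d) and the word recording
   which of e_0, ..., e_d are vertical determine each other up to xor with an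
   alternating sequence; as e_0 is horizontal, a determines this word, and the
   word determines the snake graph and its last edge.  Swapping the axes
   negates the word, and reflecting in y = -x or rotating reverses it; on the
   side of a, making e_0 horizontal again turns [a_1, ...] into
   [1, a_1 - 1, ...], and reversal of the word reverses a. *)

Fixpoint xor_alternating (c : bool) (L : list bool) : list bool :=
  match L with
  | [] => []
  | x :: t => xorb c x :: xor_alternating (negb c) t
  end.

Definition normalize_head (E : list bool) : list bool := map (xorb (hd false E)) E.

Definition negb_tail (L : list bool) : list bool :=
  match L with [] => [] | x :: t => x :: map negb t end.

(* [false] stands for a horizontal edge; the phase of the alternating sequence is
   fixed by e_0 being horizontal. *)
Definition orientations_of_signs (L : list bool) : list bool :=
  normalize_head (xor_alternating false L).

Definition G_orientations (a : list nat) : list bool :=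
  orientations_of_signs (sign_pattern true a).

Lemma xor_alternating_xorb c L : xor_alternating c L = map (xorb c) (xor_alternating false L).
Proof.
  revert c; induction L as [|x t IH]; intros c; simpl; [reflexivity|].
  rewrite (IH (negb c)), (IH true), map_map.
  f_equal; apply map_ext; intros y; destruct c, y; reflexivity.
Qed.

Lemma xor_alternating_map_xorb c b L :
  xor_alternating c (map (xorb b) L) = map (xorb b) (xor_alternating c L).
Proof.
  revert c; induction L as [|x t IH]; intros c; simpl; [reflexivity|].
  rewrite IH; f_equal; destruct b, c, x; reflexivity.
Qed.

Lemma xor_alternating_app c l1 l2 :
  xor_alternating c (l1 ++ l2) =
  xor_alternating c l1 ++ xor_alternating (xorb c (Nat.odd (length l1))) l2.
Proof.
  revert c; induction l1 as [|x l1 IH]; intros c; simpl.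
  - rewrite xorb_false_r; reflexivity.
  - rewrite IH, Nat.odd_succ, <- Nat.negb_odd.
    destruct c, (Nat.odd (length l1)); reflexivity.
Qed.

Lemma rev_xor_alternating c L :
  rev (xor_alternating c L) = xor_alternating (xorb c (Nat.even (length L))) (rev L).
Proof.
  revert c; induction L as [|x t IH]; intros c; cbn [xor_alternating rev length];
    [reflexivity|].
  rewrite IH, xor_alternating_app, length_rev, Nat.even_succ, <- Nat.negb_even.
  destruct c, (Nat.even (length t)); reflexivity.
Qed.

Lemma length_xor_alternating c L : length (xor_alternating c L) = length L.
Proof. revert c; induction L as [|x t IH]; intros c; simpl; [|rewrite IH]; reflexivity. Qed.

Lemma nth_xor_alternating c L i : (i < length L)%nat ->
  nth i (xor_alternating c L) false = xorb (xorb c (Nat.odd i)) (nth i L false).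
Proof.
  revert c i; induction L as [|x t IH]; intros c [|i] Hi; simpl in Hi; try lia;
    cbn [xor_alternating nth]; [destruct c; reflexivity|].
  rewrite IH, Nat.odd_succ, <- Nat.negb_odd by lia.
  destruct c, (Nat.odd i); reflexivity.
Qed.

Lemma xor_alternating_involutive c L : xor_alternating c (xor_alternating c L) = L.
Proof.
  revert c; induction L as [|x t IH]; intros c; simpl; [reflexivity|].
  rewrite IH; destruct c, x; reflexivity.
Qed.

Lemma normalize_head_map_xorb b E : normalize_head (map (xorb b) E) = normalize_head E.
Proof.
  destruct E as [|e E]; [reflexivity|]. unfold normalize_head; simpl.
  rewrite map_map. f_equal; [|apply map_ext; intros x]; destruct b, e; try destruct x; reflexivity.
Qed.

Lemma normalize_head_id E : hd false E = false -> normalize_head E = E.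
Proof.
  intros Hhd. unfold normalize_head. rewrite Hhd. apply map_id.
Qed.

Lemma orientations_of_signs_map_xorb b L :
  orientations_of_signs (map (xorb b) L) = orientations_of_signs L.
Proof.
  unfold orientations_of_signs.
  rewrite xor_alternating_map_xorb. apply normalize_head_map_xorb.
Qed.

Lemma orientations_of_signs_xor_alternating c E :
  hd false E = false -> orientations_of_signs (xor_alternating c E) = E.
Proof.
  intros Hhd. unfold orientations_of_signs.
  rewrite (xor_alternating_xorb c), xor_alternating_map_xorb, xor_alternating_involutive.
  rewrite normalize_head_map_xorb. apply normalize_head_id, Hhd.
Qed.

Lemma xor_alternating_orientations_of_signs c L :
  exists b, xor_alternating c (orientations_of_signs L) = map (xorb b) L.
Proof.
  unfold orientations_of_signs, normalize_head.
  exists (xorb (hd false (xor_alternating false L)) c).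
  rewrite xor_alternating_map_xorb, (xor_alternating_xorb c), xor_alternating_involutive, map_map.
  apply map_ext; intros x; destruct c, x, (hd false (xor_alternating false L)); reflexivity.
Qed.

Lemma orientations_of_signs_negb_tail L :
  orientations_of_signs (negb_tail L) = negb_tail (orientations_of_signs L).
Proof.
  destruct L as [|x t]; [reflexivity|].
  unfold orientations_of_signs, normalize_head; simpl.
  change (map negb t) with (map (xorb true) t).
  rewrite xor_alternating_map_xorb, !map_map, xorb_nilpotent.
  f_equal. apply map_ext; intros y; destruct x, y; reflexivity.
Qed.

Lemma orientations_of_signs_rev L :
  orientations_of_signs (rev L) = normalize_head (rev (orientations_of_signs L)).
Proof.
  unfold orientations_of_signs at 2, normalize_head at 2.
  rewrite <- map_rev, normalize_head_map_xorb, rev_xor_alternating, xor_alternating_xorb.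
  rewrite normalize_head_map_xorb. reflexivity.
Qed.

Lemma map_xorb_sign_pattern b sg a :
  map (xorb b) (sign_pattern sg a) = sign_pattern (xorb b sg) a.
Proof.
  revert sg; induction a as [|x r IH]; intros sg; simpl; [reflexivity|].
  rewrite map_app, map_repeat, IH. do 2 f_equal. destruct b, sg; reflexivity.
Qed.

Lemma sign_pattern_app sg a1 a2 :
  sign_pattern sg (a1 ++ a2) =
  sign_pattern sg a1 ++ sign_pattern (xorb sg (Nat.odd (length a1))) a2.
Proof.
  revert sg; induction a1 as [|x a1 IH]; intros sg; cbn [app sign_pattern length].
  - rewrite xorb_false_r; reflexivity.
  - rewrite IH, app_assoc, Nat.odd_succ, <- Nat.negb_odd.
    destruct sg, (Nat.odd (length a1)); reflexivity.
Qed.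

Lemma rev_sign_pattern sg a :
  rev (sign_pattern sg a) = sign_pattern (xorb sg (Nat.even (length a))) (rev a).
Proof.
  revert sg; induction a as [|x r IH]; intros sg; cbn [sign_pattern rev length]; [reflexivity|].
  rewrite rev_app_distr, IH, sign_pattern_app, rev_repeat, length_rev, Nat.even_succ.
  cbn [sign_pattern]. rewrite app_nil_r, <- Nat.negb_even.
  destruct sg, (Nat.even (length r)); reflexivity.
Qed.

Lemma sign_pattern_mod_first sg x r : (0 < x)%nat ->
  sign_pattern sg (mod_first (x :: r)) = negb_tail (sign_pattern sg (x :: r)).
Proof.
  intros Hx. destruct x as [|x]; [lia|]. cbn [mod_first sign_pattern repeat app negb_tail].
  rewrite Nat.sub_succ, Nat.sub_0_r, negb_involutive, map_app, map_repeat.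
  change (map negb ?l) with (map (xorb true) l).
  rewrite map_xorb_sign_pattern. destruct sg; reflexivity.
Qed.

Lemma orientations_of_sign_pattern sg a :
  orientations_of_signs (sign_pattern sg a) = G_orientations a.
Proof.
  replace sg with (xorb (negb sg) true) by (destruct sg; reflexivity).
  rewrite <- map_xorb_sign_pattern. apply orientations_of_signs_map_xorb.
Qed.

Lemma G_orientations_mod_first a : (0 < hd 1 a)%nat ->
  G_orientations (mod_first a) = negb_tail (G_orientations a).
Proof.
  destruct a as [|x r]; intros Hx; [reflexivity|].
  unfold G_orientations. rewrite sign_pattern_mod_first by exact Hx.
  apply orientations_of_signs_negb_tail.
Qed.

Lemma G_orientations_rev a :
  G_orientations (rev a) = normalize_head (rev (G_orientations a)).
Proof.
  unfold G_orientations at 2.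
  rewrite <- orientations_of_signs_rev, rev_sign_pattern.
  symmetry; apply orientations_of_sign_pattern.
Qed.

Definition is_east (k : last_kind) : bool := match k with LNorth => false | LEast => true end.

(* Which of e_0, ..., e_d are vertical: e_i (0 < i < d) is vertical iff G_{i+1} lies east of G_i. *)
Definition orientations (s : list bool) (k : last_kind) : list bool := false :: s ++ [is_east k].

Definition presentation_edges (s : list bool) (k : last_kind) : list edge :=
  south (tpos s 0) :: interior_edges s ++ [last_edge s k].

Lemma length_orientations s k : length (orientations s k) = S (S (length s)).
Proof. unfold orientations; simpl; rewrite length_app; simpl; lia. Qed.

Lemma length_interior_edges s : length (interior_edges s) = length s.
Proof. unfold interior_edges; rewrite length_map, length_seq; reflexivity. Qed.

Lemma length_presentation_edges s k : length (presentation_edges s k) = S (S (length s)).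
Proof. unfold presentation_edges; simpl; rewrite length_app, length_interior_edges; simpl; lia. Qed.

Lemma nth_interior_edges s i : (i < length s)%nat ->
  nth i (interior_edges s) (H 0 0) =
  if nth i s false then east (tpos s i) else north (tpos s i).
Proof.
  intros Hi. unfold interior_edges.
  set (g := fun i => if nth i s false then east (tpos s i) else north (tpos s i)).
  rewrite (nth_indep _ (H 0 0) (g 0%nat)) by (rewrite length_map, length_seq; lia).
  rewrite map_nth, seq_nth by lia. reflexivity.
Qed.

Lemma firstn_succ_nth (s : list bool) j : (j < length s)%nat ->
  firstn (S j) s = firstn j s ++ [nth j s false].
Proof.
  revert j; induction s as [|b s IH]; intros j Hj; simpl in *; [lia|].
  destruct j; simpl; [reflexivity|]. rewrite IH by lia. reflexivity.
Qed.

Lemma tpos_succ s j : (j < length s)%nat ->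
  tpos s (S j) = if nth j s false then (fst (tpos s j) + 1, snd (tpos s j))
                 else (fst (tpos s j), snd (tpos s j) + 1).
Proof.
  intros Hj. unfold tpos. rewrite firstn_succ_nth, !count_occ_app by exact Hj. simpl.
  destruct (nth j s false); simpl; f_equal; lia.
Qed.

Lemma nth_presentation_edges_entry s k i : (i <= length s)%nat ->
  nth i (presentation_edges s k) (H 0 0) =
  if nth i (orientations s k) false then west (tpos s i) else south (tpos s i).
Proof.
  intros Hi. destruct i as [|j]; [reflexivity|]. cbn [nth presentation_edges orientations].
  rewrite !app_nth1, nth_interior_edges, tpos_succ by (rewrite ?length_interior_edges; lia).
  destruct (nth j s false); reflexivity.
Qed.

Lemma nth_presentation_edges_exit s k i : (i <= length s)%nat ->
  nth (S i) (presentation_edges s k) (H 0 0) =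
  if nth (S i) (orientations s k) false then east (tpos s i) else north (tpos s i).
Proof.
  intros Hi. cbn [nth presentation_edges orientations].
  destruct (Nat.eq_dec i (length s)) as [->|Hne].
  - rewrite !app_nth2, length_interior_edges, Nat.sub_diag by (rewrite ?length_interior_edges; lia).
    destruct k; reflexivity.
  - rewrite !app_nth1, nth_interior_edges by (rewrite ?length_interior_edges; lia).
    reflexivity.
Qed.

Section SignFunction.

Variables (s : list bool) (k : last_kind) (f : edge -> bool).
Hypothesis f_sign : sign_fun s f.

Let south_sign (i : nat) : bool := f (south (tpos s i)).

Lemma sign_entry_edge i : (i <= length s)%nat ->
  f (nth i (presentation_edges s k) (H 0 0)) = xorb (south_sign i) (nth i (orientations s k) false).
Proof.
  intros Hi. rewrite nth_presentation_edges_entry by exact Hi.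
  destruct (f_sign i Hi) as [NW [SE NS]]. unfold south_sign.
  destruct (nth i (orientations s k) false); [rewrite <- NW|];
    destruct (f (north (tpos s i))), (f (south (tpos s i))); simpl in *; congruence.
Qed.

Lemma sign_exit_edge i : (i <= length s)%nat ->
  f (nth (S i) (presentation_edges s k) (H 0 0)) =
  negb (xorb (south_sign i) (nth (S i) (orientations s k) false)).
Proof.
  intros Hi. rewrite nth_presentation_edges_exit by exact Hi.
  destruct (f_sign i Hi) as [NW [SE NS]]. unfold south_sign.
  destruct (nth (S i) (orientations s k) false); [rewrite <- SE|];
    destruct (f (north (tpos s i))), (f (south (tpos s i))); simpl in *; congruence.
Qed.

(* The edge shared by consecutive tiles is the exit of one and the entry of the next. *)
Lemma south_sign_alternates i : (i <= length s)%nat ->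
  south_sign i = xorb (south_sign 0) (Nat.odd i).
Proof.
  induction i as [|i IH]; intros Hi; [destruct (south_sign 0); reflexivity|].
  assert (Hshared := sign_entry_edge (S i) Hi).
  rewrite sign_exit_edge in Hshared by lia.
  rewrite IH in Hshared by lia.
  rewrite Nat.odd_succ, <- Nat.negb_odd.
  destruct (south_sign 0), (Nat.odd i), (south_sign (S i)), (nth (S i) (orientations s k) false);
    simpl in *; congruence.
Qed.

Lemma map_sign_presentation_edges :
  map f (presentation_edges s k) = xor_alternating (f (south (tpos s 0))) (orientations s k).
Proof.
  apply nth_ext with (d := f (H 0 0)) (d' := false).
  { rewrite length_map, length_presentation_edges, length_xor_alternating, length_orientations.
    reflexivity. }
  intros i Hi. rewrite length_map, length_presentation_edges in Hi.
  rewrite map_nth, nth_xor_alternating by (rewrite length_orientations; lia).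
  fold (south_sign 0).
  destruct i as [|j].
  - rewrite sign_entry_edge by lia.
    destruct (south_sign 0), (nth 0 (orientations s k) false); reflexivity.
  - rewrite sign_exit_edge, south_sign_alternates, Nat.odd_succ, <- Nat.negb_odd by lia.
    destruct (south_sign 0), (Nat.odd j), (nth (S j) (orientations s k) false); reflexivity.
Qed.

End SignFunction.

Definition parity_sign (e : edge) : bool :=
  match e with H x y => Z.even (x + y) | V x y => Z.odd (x + y) end.

Lemma sign_fun_parity_sign s : sign_fun s parity_sign.
Proof.
  intros i _. destruct (tpos s i) as [x y]. unfold north, south, west, east; simpl.
  replace (x + (y + 1)) with (Z.succ (x + y)) by lia.
  replace (x + 1 + y) with (Z.succ (x + y)) by lia.
  rewrite Z.even_succ, Z.odd_succ, <- Z.negb_even.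
  destruct (Z.even (x + y)); repeat split; discriminate.
Qed.

Lemma is_G_iff a s k : is_G a s k <-> orientations s k = G_orientations a.
Proof.
  split.
  - intros [f [Hf [sg Hpattern]]].
    fold (presentation_edges s k) in Hpattern.
    rewrite map_sign_presentation_edges in Hpattern by exact Hf.
    rewrite <- (orientations_of_sign_pattern sg), <- Hpattern.
    symmetry; apply orientations_of_signs_xor_alternating; reflexivity.
  - intros Horient. exists parity_sign. split; [apply sign_fun_parity_sign|].
    fold (presentation_edges s k).
    rewrite map_sign_presentation_edges, Horient by apply sign_fun_parity_sign.
    destruct (xor_alternating_orientations_of_signs (parity_sign (south (tpos s 0)))
                (sign_pattern true a)) as [b Hb].
    exists (xorb b true). rewrite <- map_xorb_sign_pattern. exact Hb.
Qed.

Ltac solve_in_tile :=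
  let x := fresh "x" in let y := fresh "y" in
  let a := fresh "a" in let b := fresh "b" in let Heq := fresh "Heq" in
  intros [x y] [a b|a b]; unfold in_tile, south, north, west, east; simpl;
  split; intros [Heq|[Heq|[Heq|Heq]]]; inversion Heq; subst;
  first [ left; f_equal; lia
        | right; left; f_equal; lia
        | right; right; left; f_equal; lia
        | right; right; right; f_equal; lia ].

Lemma in_tile_shift u v : forall p e,
  in_tile p (Defs.shift u v e) <-> in_tile (fst p - u, snd p - v) e.
Proof. solve_in_tile. Qed.

Lemma in_tile_refl_diag : forall p e,
  in_tile p (refl_diag e) <-> in_tile (snd p, fst p) e.
Proof. solve_in_tile. Qed.

Lemma in_tile_refl_antidiag : forall p e,
  in_tile p (refl_antidiag e) <-> in_tile (- snd p - 1, - fst p - 1) e.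
Proof. solve_in_tile. Qed.

Lemma in_tile_rot180 : forall p e,
  in_tile p (rot180 e) <-> in_tile (- fst p - 1, - snd p - 1) e.
Proof. solve_in_tile. Qed.

Lemma translate_of_image_snake_edges (g : edge -> edge) (psi : Z * Z -> Z * Z)
    (s s' : list bool) (sigma : nat -> nat) (u v : Z) :
  (forall e, g (g e) = e) ->
  (forall p e, in_tile p (g e) <-> in_tile (psi p) e) ->
  length s' = length s ->
  (forall j, (j <= length s)%nat -> (sigma j <= length s)%nat /\ sigma (sigma j) = j) ->
  (forall j, (j <= length s)%nat ->
     tpos s' j = (fst (psi (tpos s (sigma j))) - u, snd (psi (tpos s (sigma j))) - v)) ->
  translate_of (image g (snake_edges s)) (snake_edges s').
Proof.
  intros g_inv g_tile Hlen Hsigma Htpos. exists u, v. intros e.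
  assert (Hsnake : snake_edges s' e <-> snake_edges s (g (Defs.shift u v e))).
  { unfold snake_edges. rewrite Hlen. split.
    - intros [j [Hj Hin]]. exists (sigma j). split; [apply Hsigma, Hj|].
      rewrite g_tile, in_tile_shift, <- Htpos by exact Hj. exact Hin.
    - intros [i [Hi Hin]]. destruct (Hsigma i Hi) as [Hsi Hii].
      exists (sigma i). split; [exact Hsi|].
      rewrite Htpos, Hii by exact Hsi.
      rewrite g_tile, in_tile_shift in Hin. exact Hin. }
  rewrite Hsnake. unfold image. split.
  - intros Hin. exists (g (Defs.shift u v e)). split; [exact Hin|symmetry; apply g_inv].
  - intros [e0 [Hin ->]]. rewrite g_inv. exact Hin.
Qed.

Lemma count_occ_map_negb (l : list bool) b :
  count_occ Bool.bool_dec (map negb l) b = count_occ Bool.bool_dec l (negb b).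
Proof.
  induction l as [|c l IH]; simpl; [reflexivity|].
  destruct c, b; simpl; rewrite IH; reflexivity.
Qed.

Lemma tpos_map_negb s j : tpos (map negb s) j = (snd (tpos s j), fst (tpos s j)).
Proof. unfold tpos; simpl. rewrite firstn_map, !count_occ_map_negb. reflexivity. Qed.

Lemma tpos_rev s j : (j <= length s)%nat ->
  tpos (rev s) j = (fst (tpos s (length s)) - fst (tpos s (length s - j)),
                    snd (tpos s (length s)) - snd (tpos s (length s - j))).
Proof.
  intros Hj. unfold tpos; simpl. rewrite firstn_rev, !count_occ_rev, firstn_all.
  assert (Hsplit : forall b, count_occ Bool.bool_dec s b =
    (count_occ Bool.bool_dec (firstn (length s - j) s) b
     + count_occ Bool.bool_dec (skipn (length s - j) s) b)%nat).
  { intros b. rewrite <- count_occ_app, firstn_skipn. reflexivity. }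
  rewrite !Hsplit. f_equal; lia.
Qed.

Lemma image_refl_diag s :
  translate_of (image refl_diag (snake_edges s)) (snake_edges (map negb s)).
Proof.
  apply (translate_of_image_snake_edges refl_diag (fun p => (snd p, fst p)) s _ (fun j => j) 0 0).
  - intros [x y|x y]; reflexivity.
  - exact in_tile_refl_diag.
  - apply length_map.
  - intros j Hj. split; [exact Hj|reflexivity].
  - intros j _. rewrite tpos_map_negb. simpl. f_equal; lia.
Qed.

Lemma image_refl_antidiag s :
  translate_of (image refl_antidiag (snake_edges s)) (snake_edges (rev (map negb s))).
Proof.
  apply (translate_of_image_snake_edges refl_antidiag (fun p => (- snd p - 1, - fst p - 1))
           s _ (fun j => length s - j)%nat
           (- snd (tpos s (length s)) - 1) (- fst (tpos s (length s)) - 1)).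
  - intros [x y|x y]; simpl; f_equal; lia.
  - exact in_tile_refl_antidiag.
  - rewrite length_rev, length_map. reflexivity.
  - intros j Hj. split; lia.
  - intros j Hj. rewrite <- map_rev, tpos_map_negb, tpos_rev by exact Hj.
    cbn [fst snd]. f_equal; lia.
Qed.

Lemma image_rot180 s : translate_of (image rot180 (snake_edges s)) (snake_edges (rev s)).
Proof.
  apply (translate_of_image_snake_edges rot180 (fun p => (- fst p - 1, - snd p - 1))
           s _ (fun j => length s - j)%nat
           (- fst (tpos s (length s)) - 1) (- snd (tpos s (length s)) - 1)).
  - intros [x y|x y]; simpl; f_equal; lia.
  - exact in_tile_rot180.
  - apply length_rev.
  - intros j Hj. split; lia.
  - intros j Hj. rewrite tpos_rev by exact Hj. cbn [fst snd]. f_equal; lia.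
Qed.

Lemma orientations_inj s k s' k' : orientations s k = orientations s' k' -> s = s' /\ k = k'.
Proof.
  unfold orientations. intros Heq. injection Heq as Heq.
  apply app_inj_tail in Heq as [-> Hk]. split; [reflexivity|].
  destruct k, k'; simpl in Hk; congruence.
Qed.

Lemma transform_is_intro g s s' k' b :
  translate_of (image g (snake_edges s)) (snake_edges s') ->
  G_orientations b = orientations s' k' ->
  transform_is g s b.
Proof.
  intros Htrans Horient. split.
  - exists s', k'. apply is_G_iff. symmetry; exact Horient.
  - intros s2 k2 HG. apply is_G_iff in HG. rewrite Horient in HG.
    apply orientations_inj in HG as [-> _]. exact Htrans.
Qed.

Definition flip_kind (k : last_kind) : last_kind :=
  match k with LNorth => LEast | LEast => LNorth end.

Lemma negb_tail_orientations s k :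
  negb_tail (orientations s k) = orientations (map negb s) (flip_kind k).
Proof. unfold orientations; simpl. rewrite map_app. destruct k; reflexivity. Qed.

Lemma normalize_head_rev_orientations_north s :
  normalize_head (rev (orientations s LNorth)) = orientations (rev s) LNorth.
Proof.
  unfold orientations. simpl. rewrite rev_app_distr. apply normalize_head_id. reflexivity.
Qed.

Lemma normalize_head_rev_orientations_east s :
  normalize_head (rev (orientations s LEast)) = orientations (rev (map negb s)) LEast.
Proof.
  unfold orientations, normalize_head. simpl. rewrite rev_app_distr; simpl.
  rewrite map_app, map_rev. reflexivity.
Qed.

Lemma hd_positive (l : list nat) : (forall x, In x l -> (0 < x)%nat) -> (0 < hd 1 l)%nat.
Proof. destruct l as [|x l]; intros Hpos; simpl; [lia|apply Hpos; left; reflexivity]. Qed.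

Theorem proposition3p1 (a : list nat) (s : list bool) (k : last_kind) :
  (forall x, In x a -> (0 < x)%nat) ->
  is_G a s k ->
  (* (a) *)
  transform_is refl_diag s (mod_first a) /\
  (* (b) *)
  (k = LNorth -> transform_is refl_antidiag s (mod_first (rev a))) /\
  (k = LEast -> transform_is refl_antidiag s (rev a)) /\
  (* (c) *)
  (k = LNorth -> transform_is rot180 s (rev a)) /\
  (k = LEast -> transform_is rot180 s (mod_first (rev a))).
Proof.
  intros Hpos HG. apply is_G_iff in HG.
  assert (Hfirst := hd_positive a Hpos).
  assert (Hlast : (0 < hd 1 (rev a))%nat).
  { apply hd_positive. intros x Hx. apply Hpos, in_rev, Hx. }
  split; [|split; [|split; [|split]]]; [|intros ->..].
  - apply (transform_is_intro _ _ _ (flip_kind k) _ (image_refl_diag s)).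
    rewrite G_orientations_mod_first, <- HG by exact Hfirst.
    apply negb_tail_orientations.
  - apply (transform_is_intro _ _ _ LEast _ (image_refl_antidiag s)).
    rewrite G_orientations_mod_first, G_orientations_rev, <- HG by exact Hlast.
    rewrite normalize_head_rev_orientations_north, negb_tail_orientations, map_rev.
    reflexivity.
  - apply (transform_is_intro _ _ _ LEast _ (image_refl_antidiag s)).
    rewrite G_orientations_rev, <- HG. apply normalize_head_rev_orientations_east.
  - apply (transform_is_intro _ _ _ LNorth _ (image_rot180 s)).
    rewrite G_orientations_rev, <- HG. apply normalize_head_rev_orientations_north.
  - apply (transform_is_intro _ _ _ LNorth _ (image_rot180 s)).
    rewrite G_orientations_mod_first, G_orientations_rev, <- HG by exact Hlast.
    rewrite normalize_head_rev_orientations_east, negb_tail_orientations, map_rev, map_map.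
    rewrite (map_ext _ id negb_involutive), map_id. reflexivity.
Qed.
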